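(* Let $G$ be a finite simple graph on $n$ vertices and $v$ a vertex of $G$ of degree $d$. Then \[\max\{-d,\,-(n-d-1)\}\le \mathrm{mur}(G)-\mathrm{mur}(G\setminus\{v\})\le \min\{d+2,\,(n-d-1)+2\},\] where $G\setminus\{v\}$ is the graph obtained from $G$ by deleting $v$ and its incident edges.
   Context: For a finite simple undirected graph $G$ on vertices $v_1,\dots,v_n$, let $A_G$ be its $(0,1)$-adjacency matrix, $D_G=\mathrm{diag}(d_1,\dots,d_n)$ with $d_i$ the degree of $v_i$, $I$ the $n\times n$ identity matrix and $J$ the $n\times n$ all-ones matrix. A universal adjacency matrix of $G$ is any matrix $\alpha A_G+\beta I+\gamma J+\delta D_G$ with real scalars $\alpha,\beta,\gamma,\delta$ and $\alpha\neq 0$. The minimum universal rank $\mathrm{mur}(G)$ is the minimum rank over all universal adjacency matrices of $G$. *)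

From HB Require Import structures.
From mathcomp Require Import all_boot all_order all_algebra.
From Stdlib Require Reals.
From mathcomp Require Import boolp Rstruct.
Notation R := Rdefinitions.R.
Set Implicit Arguments. Unset Strict Implicit. Unset Printing Implicit Defensive.
Import Order.TTheory GRing.Theory Num.Theory.
Local Open Scope ring_scope.

Definition simple_graph (T : finType) (e : rel T) : Prop :=
  symmetric e /\ irreflexive e.

Definition deg (T : finType) (e : rel T) (x : T) : nat := #|[set y | e x y]|.

(* Universal adjacency matrix  alpha A + beta I + gamma J + delta D, over the
   real numbers (Stdlib R, a realType via Rstruct), indexed by 'I_#|T|
   through the enumeration of T. *)
Definition univ_adj (T : finType) (e : rel T) (a b c d : R) : 'M[R]_#|T| :=
  \matrix_(i, j)
    (a * (e (enum_val i) (enum_val j))%:R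
     + b * (i == j)%:R
     + c
     + d * (i == j)%:R * (deg e (enum_val i))%:R).

Definition univ_rank (T : finType) (e : rel T) : pred nat :=
  fun r => `[< exists a b c d : R, a != 0 /\ \rank (univ_adj e a b c d) = r >].

Lemma univ_rank_ex (T : finType) (e : rel T) : exists r, univ_rank e r.
Proof. by exists (\rank (univ_adj e 1 0 0 0)); apply/asboolP; exists 1, 0, 0, 0; rewrite oner_eq0. Qed.

Definition mur (T : finType) (e : rel T) : nat := ex_minn (univ_rank_ex e).

Definition del_vertex (T : finType) (e : rel T) (v : T) : rel {x : T | x != v} :=
  fun x y => e (val x) (val y).
Arguments del_vertex [T] e v.

From HB Require Import structures.
From mathcomp Require Import all_boot all_order all_algebra.
From mathcomp Require Import boolp Rstruct ring zify.
(* Let M = aA + bI + cJ + dD be a universal adjacency matrix of G. Deleting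
   the row and column of v gives the universal adjacency matrix of G - v with
   the same coefficients, except that D has dropped by one at the neighbours of
   v: a diagonal correction of rank at most deg v. Shifting b by d moves the
   correction onto the non-neighbours, giving rank at most n - deg v - 1
   instead. Since deleting a row and a column never increases the rank and
   lowers it by at most 2, an optimal M for either graph yields the four
   inequalities. *)

Set Implicit Arguments. Unset Strict Implicit. Unset Printing Implicit Defensive.
Import Order.TTheory GRing.Theory Num.Theory.
Local Open Scope ring_scope.

Section RankOfSubmatrices.

Variable F : fieldType.

Lemma mxrank_le_card_support m n (A : 'M[F]_(m, n)) (P : {set 'I_m}) :
  (forall i, i \notin P -> row i A = 0) -> (\rank A <= #|P|)%N.
Proof.
move=> A0; pose g (k : 'I_#|P|) := enum_val k.
have sAgA : (A <= rowsub g A)%MS.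
  apply/row_subP => i; have [Pi|/A0->] := boolP (i \in P); last exact: sub0mx.
  by rewrite -(enum_rankK_in Pi Pi) -row_rowsub row_sub.
exact: leq_trans (mxrankS sAgA) (rank_leq_row _).
Qed.

Lemma mxrank_diag_mx_le n (d : 'rV[F]_n) :
  (\rank (diag_mx d) <= #|[set i | d ord0 i != 0%R]|)%N.
Proof.
apply: mxrank_le_card_support => i; rewrite inE negbK => /eqP di0.
by apply/rowP => j; rewrite !mxE di0 mul0rn.
Qed.

Lemma mxrank_le_rowsub_addn1 m m' n (A : 'M[F]_(m, n)) (f : 'I_m' -> 'I_m) i0 :
  (forall i, i != i0 -> exists k, f k = i) ->
  (\rank A <= \rank (rowsub f A) + 1)%N.
Proof.
move=> f_onto.
have sA : (A <= rowsub f A + row i0 A)%MS.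
  apply/row_subP => i; have [->|/f_onto[k <-]] := eqVneq i i0; first exact: addsmxSr.
  by rewrite -row_rowsub (submx_trans (row_sub _ _) (addsmxSl _ _)).
apply: leq_trans (mxrankS sA) (leq_trans (mxrank_adds_leqif _ _).1 _).
by rewrite leq_add2l rank_leq_row.
Qed.

Lemma mxrank_colsub m n n' (A : 'M[F]_(m, n)) (g : 'I_n' -> 'I_n) :
  \rank (colsub g A) = \rank (rowsub g A^T).
Proof. by rewrite -mxrank_tr trmx_mxsub. Qed.

Lemma mxrank_mxsub_le m n m' n' (A : 'M[F]_(m, n)) (f : 'I_m' -> 'I_m)
    (g : 'I_n' -> 'I_n) :
  (\rank (mxsub f g A) <= \rank A)%N.
Proof.
rewrite mxsubrc; apply: leq_trans (mxrankS (rowsub_sub _ _)) _.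
by rewrite mxrank_colsub -(mxrank_tr A) mxrankS ?rowsub_sub.
Qed.

Lemma mxrank_le_mxsub_addn2 m n m' n' (A : 'M[F]_(m, n)) (f : 'I_m' -> 'I_m)
    (g : 'I_n' -> 'I_n) i0 j0 :
  (forall i, i != i0 -> exists k, f k = i) ->
  (forall j, j != j0 -> exists k, g k = j) ->
  (\rank A <= \rank (mxsub f g A) + 2)%N.
Proof.
move=> f_onto g_onto; rewrite mxsubrc.
have := mxrank_le_rowsub_addn1 (colsub g A) f_onto.
have := mxrank_le_rowsub_addn1 A^T g_onto.
rewrite mxrank_tr -mxrank_colsub; lia.
Qed.

End RankOfSubmatrices.

Lemma card_enum_val_preim (S : finType) (P : pred S) :
  #|[set k : 'I_#|S| | P (enum_val k)]| = #|[set y | P y]|.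
Proof.
have -> : [set k : 'I_#|S| | P (enum_val k)] = enum_val @^-1: [set y | P y].
  by apply/setP => k; rewrite !inE.
exact/on_card_preimset/onW_bij/enum_val_bij.
Qed.

Lemma univ_adj_enum_rank (T : finType) (e : rel T) a b c d (x y : T) :
  univ_adj e a b c d (enum_rank x) (enum_rank y) =
  a * (e x y)%:R + b * (x == y)%:R + c + d * (x == y)%:R * (deg e x)%:R.
Proof. by rewrite mxE !enum_rankK (inj_eq enum_rank_inj). Qed.

Lemma mur_le_rank (T : finType) (e : rel T) a b c d : a != 0 ->
  (mur e <= \rank (univ_adj e a b c d))%N.
Proof.
by move=> a0; rewrite /mur; case: ex_minnP => r _; apply; apply/asboolP; exists a, b, c, d.
Qed.

Lemma mur_attained (T : finType) (e : rel T) :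
  exists a b c d, a != 0 /\ \rank (univ_adj e a b c d) = mur e.
Proof. by rewrite /mur; case: ex_minnP => r /asboolP. Qed.

Section DeleteVertex.

Variables (T : finType) (e : rel T) (v : T).

Local Notation T' := {x : T | x != v}.
Local Notation e' := (del_vertex e v).

Definition del_vertex_ord (k : 'I_#|{: T'}|) : 'I_#|T| := enum_rank (val (enum_val k)).

Lemma del_vertex_ord_onto i : i != enum_rank v -> exists k, del_vertex_ord k = i.
Proof.
move=> iNv; have xv : enum_val i != v by apply: contra iNv => /eqP <-; rewrite enum_valK.
exists (enum_rank (Sub (enum_val i) xv : T')).
by rewrite /del_vertex_ord enum_rankK SubK enum_valK.
Qed.

Definition adj_deleted (k : 'I_#|{: T'}|) : bool := e (val (enum_val k)) v.

Lemma deg_del_vertex (x : T') : deg e (val x) = (deg e' x + e (val x) v)%N.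
Proof.
rewrite /deg (cardsD1 v) inE addnC; congr (_ + _)%N.
rewrite -(card_imset _ val_inj); apply: eq_card => y; rewrite !inE.
apply/andP/imsetP => [[yv exy]|[z]]; first by exists (Sub y yv); rewrite ?inE ?SubK.
by rewrite inE => ez ->; rewrite (valP z).
Qed.

(* Deleting v lowers the degree of its neighbours by one; the shift of the
   identity coefficient by [s * d] moves this correction onto the
   non-neighbours when [s] is true. *)
Definition deletion_correction (s : bool) (d : R) : 'M[R]_#|{: T'}| :=
  diag_mx (\row_k (d * ((adj_deleted k)%:R - s%:R))).

Lemma mxsub_univ_adj_del_vertex (s : bool) a b c d :
  mxsub del_vertex_ord del_vertex_ord (univ_adj e a b c d) =
  univ_adj e' a (b + s%:R * d) c d + deletion_correction s d.
Proof.
apply/matrixP => k l; rewrite mxE univ_adj_enum_rank !mxE (inj_eq val_inj).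
rewrite (inj_eq enum_val_inj) deg_del_vertex natrD /adj_deleted /del_vertex.
by case: eqP => [->|_]; rewrite ?mulr1n ?mulr0n; ring.
Qed.

Lemma mxrank_deletion_correction (s : bool) d :
  (\rank (deletion_correction s d) <= #|[set k | adj_deleted k != s]|)%N.
Proof.
apply: leq_trans (mxrank_diag_mx_le _) (subset_leq_card _).
apply/subsetP => k; rewrite !inE mxE; apply: contraNneq => ->.
by rewrite subrr mulr0.
Qed.

Lemma mur_del_vertex_le (s : bool) :
  (mur e' <= mur e + #|[set k | adj_deleted k != s]|)%N.
Proof.
have [a [b [c [d [a0 <-]]]]] := mur_attained e.
apply: leq_trans (mur_le_rank e' (b + s%:R * d) c d a0) _.
have -> : univ_adj e' a (b + s%:R * d) c d =
          mxsub del_vertex_ord del_vertex_ord (univ_adj e a b c d)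
          - deletion_correction s d.
  by rewrite (mxsub_univ_adj_del_vertex s) addrK.
apply: leq_trans (mxrank_add _ _) (leq_add (mxrank_mxsub_le _ _ _) _).
by rewrite mxrank_opp mxrank_deletion_correction.
Qed.

Lemma mur_le_del_vertex (s : bool) :
  (mur e <= mur e' + #|[set k | adj_deleted k != s]| + 2)%N.
Proof.
have [a [b [c [d [a0 <-]]]]] := mur_attained e'.
apply: leq_trans (mur_le_rank e (b - s%:R * d) c d a0) _.
apply: leq_trans (mxrank_le_mxsub_addn2 _ del_vertex_ord_onto del_vertex_ord_onto) _.
rewrite leq_add2r (mxsub_univ_adj_del_vertex s) subrK.
exact: leq_trans (mxrank_add _ _) (leq_add (leqnn _) (mxrank_deletion_correction _ _)).
Qed.

Lemma card_adj_deleted (s : bool) : simple_graph e ->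
  #|[set k | adj_deleted k != s]| = if s then (#|T| - deg e v - 1)%N else deg e v.
Proof.
move=> [e_sym e_irr].
have card_adj : #|[set k | adj_deleted k]| = deg e v.
  rewrite (card_enum_val_preim (fun y : T' => e (val y) v)) /deg.
  rewrite -(card_imset _ val_inj); apply: eq_card => x; rewrite !inE e_sym.
  apply/imsetP/idP => [[y]|exv]; first by rewrite inE => ? ->.
  have xv : x != v by apply: contraTneq exv => ->; rewrite e_irr.
  by exists (Sub x xv); rewrite ?inE ?SubK.
have card_T' : #|{: T'}| = (#|T| - 1)%N by rewrite card_sig cardC1 subn1.
case: s.
  have -> : [set k | adj_deleted k != true] = ~: [set k | adj_deleted k].
    by apply/setP => k; rewrite !inE eqb_id.
  have := cardsC [set k | adj_deleted k]; rewrite card_ord card_adj; lia.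
by rewrite -card_adj; apply: eq_card => k; rewrite !inE; case: adj_deleted.
Qed.

End DeleteVertex.

Theorem corollary18 (T : finType) (e : rel T) (v : T) :
  simple_graph e ->
  let n := #|T| in let d := deg e v in
  Num.max (- (d%:Z)) (- ((n - d - 1)%N%:Z)) <= (mur e)%:Z - (mur (del_vertex e v))%:Z
  /\ (mur e)%:Z - (mur (del_vertex e v))%:Z <= Num.min (d%:Z + 2) ((n - d - 1)%N%:Z + 2).
Proof.
move=> G_simple n d.
have := mur_del_vertex_le e v false; have := mur_del_vertex_le e v true.
have := mur_le_del_vertex e v false; have := mur_le_del_vertex e v true.
rewrite !card_adj_deleted //= -/n -/d => up_codeg up_deg low_codeg low_deg.
by rewrite ge_max le_min; split; apply/andP; split; lia.
Qed.
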